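(* Let $\alpha\ge0$ and let $P=\{p_0,p_1,\dots,p_k\}\subset\mathbb R^n$ with $p_0=0$ and $\|p_i\|\le\alpha$ for all $i$. Then for every $x\in\mathrm{CH}(P)$ there exists $p_i\in P$ with $\|x-p_i\|\le\alpha/\sqrt2$.
   Context: $\mathrm{CH}(P)$ denotes the convex hull of $P$; $\|\cdot\|$ is the Euclidean norm. *)

From HB Require Import structures.
From mathcomp Require Import all_boot all_order all_algebra.
Set Implicit Arguments. Unset Strict Implicit. Unset Printing Implicit Defensive.
Import Order.TTheory GRing.Theory Num.Theory.
Local Open Scope ring_scope.

Definition enorm (R : rcfType) (n : nat) (v : 'rV[R]_n) : R :=
  Num.sqrt (\sum_(i < n) v 0 i ^+ 2).

Definition in_convex_hull (R : rcfType) (n k : nat)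
  (p : 'I_k.+1 -> 'rV[R]_n) (x : 'rV[R]_n) : Prop :=
  exists w : 'I_k.+1 -> R,
    (forall i, 0 <= w i) /\ \sum_(i < k.+1) w i = 1 /\
    x = \sum_(i < k.+1) w i *: p i.

(** Let [x = sum_i w_i p_i] be a convex combination. The barycentric identity
    [sum_i w_i ||x - p_i||^2 = sum_i w_i ||p_i||^2 - ||x||^2 <= alpha^2 - ||x||^2]
    shows that some [p_i] is within [sqrt (alpha^2 - ||x||^2)] of [x], while
    [p_0 = 0] is at distance [||x||]. The smaller of [||x||^2] and
    [alpha^2 - ||x||^2] is at most [alpha^2 / 2]. *)

From HB Require Import structures.
From mathcomp Require Import all_boot all_order all_algebra.
From mathcomp Require Import ring lra.
Import Order.TTheory GRing.Theory Num.Theory.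
Set Implicit Arguments. Unset Strict Implicit.
Local Open Scope ring_scope.

Definition sqnorm (R : comNzRingType) (n : nat) (v : 'rV[R]_n) : R :=
  \sum_(i < n) v 0 i ^+ 2.

Lemma sqnorm_ge0 (R : realDomainType) (n : nat) (v : 'rV[R]_n) :
  0 <= sqnorm v.
Proof. by apply: sumr_ge0 => i _; rewrite sqr_ge0. Qed.

Lemma enorm_sqr (R : rcfType) (n : nat) (v : 'rV[R]_n) :
  enorm v ^+ 2 = sqnorm v.
Proof. by rewrite sqr_sqrtr // sqnorm_ge0. Qed.

Lemma enorm_le (R : rcfType) (n : nat) (v : 'rV[R]_n) (a : R) :
  0 <= a -> (enorm v <= a) = (sqnorm v <= a ^+ 2).
Proof. by move=> a0; rewrite -enorm_sqr ler_sqr ?nnegrE ?sqrtr_ge0. Qed.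

Lemma enorm_le_div_sqrt2 (R : rcfType) (n : nat) (v : 'rV[R]_n) (a : R) :
  0 <= a -> sqnorm v * 2 <= a ^+ 2 -> enorm v <= a / Num.sqrt 2.
Proof.
move=> a0 hv; have s2 : 0 < Num.sqrt 2 :> R by rewrite sqrtr_gt0.
rewrite enorm_le ?divr_ge0 ?sqrtr_ge0 // expr_div_n sqr_sqrtr //.
by rewrite ler_pdivlMr.
Qed.

Lemma sum_weighted_sqnorm_sub (R : comNzRingType) (I : finType) (n : nat)
    (w : I -> R) (p : I -> 'rV[R]_n) (x : 'rV[R]_n) :
  \sum_i w i = 1 -> x = \sum_i w i *: p i ->
  \sum_i w i * sqnorm (x - p i) = \sum_i w i * sqnorm (p i) - sqnorm x.
Proof.
move=> w1 def_x.
have x_coord j : x 0 j = \sum_i w i * p i 0 j.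
  by rewrite def_x summxE; apply: eq_bigr => i _; rewrite mxE.
rewrite /sqnorm; under eq_bigr => i _ do rewrite big_distrr /=.
under [\sum_i w i * _]eq_bigr => i _ do rewrite big_distrr /=.
rewrite exchange_big [X in _ = X - _]exchange_big -sumrB /=; apply: eq_bigr => j _.
have expand i : w i * (x - p i) 0 j ^+ 2 =
    w i * p i 0 j ^+ 2 + (x 0 j ^+ 2 * w i - x 0 j *+ 2 * (w i * p i 0 j)).
  by rewrite !mxE; ring.
rewrite (eq_bigr _ (fun i _ => expand i)) big_split sumrB /=.
by rewrite -!mulr_sumr w1 -x_coord; ring.
Qed.

Lemma exists_lt_of_weighted_sum_lt (R : realDomainType) (I : finType)
    (w f : I -> R) (c : R) :
  (forall i, 0 <= w i) -> \sum_i w i = 1 ->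
  \sum_i w i * f i < c -> exists i, f i < c.
Proof.
move=> w0 w1 lt_c; apply/existsP; apply: contraLR lt_c => /existsPn ge_c.
rewrite -leNgt -[c]mul1r -w1 mulr_suml.
by apply: ler_sum => i _; apply: ler_wpM2l; rewrite // leNgt ge_c.
Qed.

Theorem lemma24 (R : rcfType) (n k : nat) (alpha : R)
  (p : 'I_k.+1 -> 'rV[R]_n) :
  0 <= alpha ->
  p ord0 = 0 ->
  (forall i, enorm (p i) <= alpha) ->
  forall x : 'rV[R]_n, in_convex_hull p x ->
  exists i : 'I_k.+1, enorm (x - p i) <= alpha / Num.sqrt 2.
Proof.
move=> alpha0 p0 p_le x [w [w0 [w1 def_x]]].
have [x_small | x_large] := leP (sqnorm x * 2) (alpha ^+ 2).
  by exists ord0; rewrite p0 subr0 enorm_le_div_sqrt2.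
have mean_p_le : \sum_i w i * sqnorm (p i) <= alpha ^+ 2.
  rewrite -[_ ^+ 2]mul1r -w1 mulr_suml; apply: ler_sum => i _.
  by rewrite ler_wpM2l // -enorm_le.
have mean_lt : \sum_i w i * sqnorm (x - p i) < alpha ^+ 2 / 2.
  rewrite sum_weighted_sqnorm_sub //; lra.
have [i lt_i] := exists_lt_of_weighted_sum_lt w0 w1 mean_lt.
exists i; apply: enorm_le_div_sqrt2 => //.
by rewrite -ler_pdivlMr // ltW.
Qed.
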